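(* Let $r,k,s_1,\dots,s_k$ be nonnegative integers, $\Gamma$ the complete bipartite supernova quiver with these parameters, and $\boldsymbol\mu=(\mu^1,\dots,\mu^k)$ a $k$-tuple of nonzero partitions with $\mu^i=(\mu^i_1\ge\cdots\ge\mu^i_{s_i+1}\ge0)$. If $\mathbf{v}_{\boldsymbol\mu}$ is an imaginary root of $\Gamma$, then $r\geq|\mu^i|$ for all $i=1,\dots,k$.
   Context: $\Gamma$ has vertex set $I$ consisting of $(l)$, $l=1,\dots,r$, and $(i;j)$, $i=1,\dots,k$, $j=0,\dots,s_i$; edges: one between $(l)$ and $(i;0)$ for every $l,i$ and one between $(i;j)$ and $(i;j-1)$ for $1\le j\le s_i$. $\mathbf{v}_{\boldsymbol\mu}$: $v_{(l)}=1$, $v_{(i;0)}=|\mu^i|$, $v_{(i;j)}=|\mu^i|-\sum_{f=1}^j\mu^i_f$. Bilinear form: $(\mathbf{e}_a,\mathbf{e}_a)=2$, $(\mathbf{e}_a,\mathbf{e}_b)=-$(number of edges joining $a,b$) for $a\ne b$; Weyl group $W$ generated by $s_a(\lambda)=\lambda-(\lambda,\mathbf{e}_a)\mathbf{e}_a$. Imaginary roots are the vectors $\pm w(\delta)$ with $w\in W$ and $\delta$ a nonzero vector in $\mathbb{Z}_{\ge0}^I$ with connected support satisfying $(\mathbf{e}_a,\delta)\le0$ for all $a$. *)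

From mathcomp Require Import all_boot all_order all_algebra.
Set Implicit Arguments. Unset Strict Implicit. Unset Printing Implicit Defensive.
Import Order.TTheory GRing.Theory Num.Theory.
Local Open Scope ring_scope.

(* Vertex set of the complete bipartite supernova quiver:
   inl l  ~ (l),  l : 'I_r  (0-indexed version of l = 1..r)
   inr (i; j) ~ (i;j), i : 'I_k, j : 'I_(s i).+1  (j = 0..s_i) *)
Definition svert (r k : nat) (s : 'I_k -> nat) : finType :=
  ('I_r + @sigT (ordinal k) (fun i => ordinal (s i).+1))%type.
Arguments svert : clear implicits.

Definition sedges (r k : nat) (s : 'I_k -> nat) (a b : svert r k s) : nat :=
  match a, b with
  | inl _, inr (existT _ j) => (val j == 0)%N
  | inr (existT _ j), inl _ => (val j == 0)%N
  | inr (existT i j), inr (existT i' j') =>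
      (i == i') && ((val j == (val j').+1) || (val j' == (val j).+1))
  | inl _, inl _ => false
  end.

Definition cartan (r k : nat) (s : 'I_k -> nat) (a b : svert r k s) : int :=
  if a == b then 2 else - (sedges a b)%:Z.

Definition form_e (r k : nat) (s : 'I_k -> nat) (a : svert r k s)
  (lam : svert r k s -> int) : int :=
  \sum_(b : svert r k s) cartan a b * lam b.

Definition sref (r k : nat) (s : 'I_k -> nat) (a : svert r k s)
  (lam : svert r k s -> int) : svert r k s -> int :=
  fun x => lam x - (if x == a then form_e a lam else 0).

Definition wact (r k : nat) (s : 'I_k -> nat) (w : seq (svert r k s))
  (lam : svert r k s -> int) : svert r k s -> int :=
  foldr (fun a f => sref a f) lam w.

Definition conn_supp (r k : nat) (s : 'I_k -> nat) (d : svert r k s -> int) : Prop :=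
  forall a b, d a != 0 -> d b != 0 ->
    connect (fun x y => [&& (0 < sedges x y)%N, d x != 0 & d y != 0]) a b.

Definition imaginary_root (r k : nat) (s : 'I_k -> nat) (v : svert r k s -> int) : Prop :=
  exists (w : seq (svert r k s)) (d : svert r k s -> int),
    [/\ (forall a, 0 <= d a), (exists a, d a != 0), conn_supp d,
        (forall a, form_e a d <= 0) &
        ((forall x, v x = wact w d x) \/ (forall x, v x = - wact w d x))].

Definition psize (k : nat) (s : 'I_k -> nat) (mu : forall i : 'I_k, 'I_(s i).+1 -> nat)
  (i : 'I_k) : nat := \sum_(f < (s i).+1) mu i f.

(* dimension vector v_mu; mu i f is mu^i_{f+1} *)
Definition vmu (r k : nat) (s : 'I_k -> nat) (mu : forall i : 'I_k, 'I_(s i).+1 -> nat)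
  (a : svert r k s) : int :=
  match a with
  | inl _ => 1
  | inr (existT i j) => (psize mu i)%:Z - (\sum_(f < (s i).+1 | (f < val j)%N) mu i f)%:Z
  end.

(* An imaginary root is [w d] or [- w d] with [d] nonnegative and antidominant,
   i.e. [(e_a, d) <= 0] for every vertex [a].  For the reflection action of a
   simply-laced Weyl group, [d <= w d] holds coordinatewise for every such [d]:
   writing [w] as a reduced word, [w d - d] is a nonnegative combination of the
   roots [w' e_a] with [l(w' s_a) > l(w')], and those roots are positive.
   Reflecting [v_mu] at (i;0), (i;1), ..., (i;s_i) in turn yields a vector whose
   (i;s_i) entry is [r - |mu^i|]; it is again of the form [w' d], hence
   nonnegative.  The sign [-] is impossible since the (i;0) entry of [v_mu] is
   [|mu^i| > 0]. *)

From mathcomp Require Import all_boot all_order all_algebra ring zify.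
From Stdlib Require Import Classical FunctionalExtensionality Wf_nat.
Set Implicit Arguments. Unset Strict Implicit. Unset Printing Implicit Defensive.
Import Order.TTheory GRing.Theory Num.Theory.
Local Open Scope ring_scope.

Lemma exists_least_nat (P : nat -> Prop) :
  (exists n, P n) -> exists2 m, P m & forall j, P j -> (m <= j)%N.
Proof.
move=> /(dec_inh_nat_subset_has_unique_least_element P (fun n => classic (P n))).
by move=> [m [[Pm m_least] _]]; exists m => // j /m_least/ssrnat.leP.
Qed.

Section SimplyLacedWeylGroup.
Variables (V : finType) (c : V -> V -> int).
Hypothesis c_sym : forall a b, c a b = c b a.
Hypothesis c_diag : forall a, c a a = 2.
Hypothesis c_offdiag : forall a b, a != b -> c a b = 0 \/ c a b = -1.
Implicit Types (a b x : V) (f g : V -> int) (p q u w : seq V).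

Definition pairing a f : int := \sum_b c a b * f b.

Definition reflection a f : V -> int :=
  fun x => f x - (if x == a then pairing a f else 0).

Definition word_action w f : V -> int := foldr reflection f w.

Definition simple_root a : V -> int := fun x => if x == a then 1 else 0.

Definition lincomb (al be : int) f g : V -> int := fun x => al * f x + be * g x.

Lemma pairing_lincomb a al be f g :
  pairing a (lincomb al be f g) = al * pairing a f + be * pairing a g.
Proof.
rewrite /pairing !mulr_sumr -big_split; apply: eq_bigr => b _ /=.
by rewrite /lincomb; ring.
Qed.

Lemma pairing_simple_root a b : pairing a (simple_root b) = c a b.
Proof.
rewrite /pairing (bigD1 b) //= /simple_root eqxx mulr1 big1 ?addr0 //.
by move=> x /negbTE ->; rewrite mulr0.
Qed.

Lemma reflectionE a f : reflection a f = lincomb 1 (- pairing a f) f (simple_root a).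
Proof.
apply: functional_extensionality => x; rewrite /reflection /lincomb /simple_root.
by case: (x == a); ring.
Qed.

Lemma reflection_lincomb a al be f g :
  reflection a (lincomb al be f g) =
  lincomb al be (reflection a f) (reflection a g).
Proof.
rewrite !reflectionE pairing_lincomb /lincomb.
by apply: functional_extensionality => x; ring.
Qed.

Lemma word_action_lincomb w al be f g :
  word_action w (lincomb al be f g) =
  lincomb al be (word_action w f) (word_action w g).
Proof. by elim: w => [|a w IH] //=; rewrite IH reflection_lincomb. Qed.

Lemma word_action_cat p q f : word_action (p ++ q) f = word_action p (word_action q f).
Proof. exact: foldr_cat. Qed.

Lemma word_action_rcons w a f : word_action (rcons w a) f = word_action w (reflection a f).
Proof. exact: foldr_rcons. Qed.

Lemma reflectionK a : involutive (reflection a).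
Proof.
move=> f; apply: functional_extensionality => x.
rewrite !(reflectionE, pairing_lincomb, pairing_simple_root) c_diag /lincomb /simple_root.
by case: (x == a); ring.
Qed.

Lemma reflection_comm a b f : c a b = 0 ->
  reflection a (reflection b f) = reflection b (reflection a f).
Proof.
move=> c0; apply: functional_extensionality => x.
rewrite !(reflectionE, pairing_lincomb, pairing_simple_root) c0 c_sym c0.
by rewrite /lincomb /simple_root; case: (x == a); case: (x == b); ring.
Qed.

Lemma reflection_braid a b f : c a b = -1 ->
  reflection a (reflection b (reflection a f)) =
  reflection b (reflection a (reflection b f)).
Proof.
move=> c1; apply: functional_extensionality => x.
rewrite !(reflectionE, pairing_lincomb, pairing_simple_root) !c_diag c1 c_sym c1.
by rewrite /lincomb /simple_root; case: (x == a); case: (x == b); ring.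
Qed.

Definition equiv_word p q := forall f, word_action p f = word_action q f.

Definition reduced w := forall q, equiv_word w q -> (size w <= size q)%N.

(* For reduced [w] this says l(w s_a) >= l(w). *)
Definition right_ascent w a := forall q, equiv_word (rcons w a) q -> (size w <= size q)%N.

Lemma exists_reduced w : exists2 w', equiv_word w w' & reduced w'.
Proof.
have [m [w' E <-] m_least] :=
  exists_least_nat (ex_intro (fun m => exists2 w', equiv_word w w' & size w' = m)
                      (size w) (ex_intro2 _ _ w (fun f => erefl) erefl)).
by exists w' => // q E'; apply: m_least; exists q => // f; rewrite E E'.
Qed.

Lemma reduced_equiv p q : reduced p -> equiv_word p q -> size q = size p -> reduced q.
Proof. by move=> p_red E qp q' E'; rewrite qp; apply: p_red => f; rewrite E E'. Qed.

Lemma reduced_catl p q : reduced (p ++ q) -> reduced p.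
Proof.
move=> pq_red p' E; have E' : equiv_word (p ++ q) (p' ++ q).
  by move=> f; rewrite !word_action_cat E.
by have := pq_red _ E'; rewrite !size_cat leq_add2r.
Qed.

Lemma reduced_catr p q : reduced (p ++ q) -> reduced q.
Proof.
move=> pq_red q' E; have E' : equiv_word (p ++ q) (p ++ q').
  by move=> f; rewrite !word_action_cat E.
by have := pq_red _ E'; rewrite !size_cat leq_add2l.
Qed.

Lemma right_ascent_equiv p q a :
  right_ascent p a -> equiv_word p q -> size q = size p -> right_ascent q a.
Proof.
move=> p_asc E qp q' E'; rewrite qp; apply: p_asc => f.
by rewrite word_action_rcons E -word_action_rcons.
Qed.

Lemma right_ascent_catr p q a : right_ascent (p ++ q) a -> right_ascent q a.
Proof.
move=> pq_asc q' E; have E' : equiv_word (rcons (p ++ q) a) (p ++ q').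
  by move=> f; rewrite rcons_cat !word_action_cat E.
by have := pq_asc _ E'; rewrite !size_cat leq_add2l.
Qed.

Lemma reduced_rcons_right_ascent w a : reduced (rcons w a) -> right_ascent w a.
Proof. by move=> wa_red q /wa_red; rewrite size_rcons; apply: ltnW. Qed.

Lemma equiv_word_rcons_aa w a : equiv_word (rcons (rcons w a) a) w.
Proof. by move=> f; rewrite !word_action_rcons reflectionK. Qed.

Lemma reduced_last2 a w : ~ reduced (rcons (rcons w a) a).
Proof.
by move/(_ _ (equiv_word_rcons_aa w a)); rewrite !size_rcons ltnNge leqnSn.
Qed.

Lemma right_ascent_last a w : ~ right_ascent (rcons w a) a.
Proof. by move/(_ _ (equiv_word_rcons_aa w a)); rewrite size_rcons ltnn. Qed.

Lemma simple_root_ge0 a x : 0 <= simple_root a x.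
Proof. by rewrite /simple_root; case: (x == a). Qed.

(* Rank two: a reduced word [u] in [a], [b] with [a] as right ascent is one of
   [::], [:: b], [:: a; b], and [u] maps the root of [a] to a nonnegative
   combination of the roots of [a] and [b]. *)
Lemma dihedral_root_ge0 a b u :
  a != b -> all (mem [:: a; b]) u -> reduced u -> right_ascent u a ->
  exists al be : int, [/\ 0 <= al, 0 <= be &
    word_action u (simple_root a) = lincomb al be (simple_root a) (simple_root b)].
Proof.
move=> ab; rewrite -[u]revK all_rev.
case: (rev u) => [|t1 [|t2 [|t3 v]]] /=; rewrite ?rev_cons ?andbT ?inE.
- by exists 1, 0; split=> //; apply: functional_extensionality => x; rewrite /lincomb; ring.
- case/pred2P => -> _ asc; first by case: (right_ascent_last (w := [::]) asc).
  exists 1, (- c b a); split; first by [].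
    have ba : b != a by rewrite eq_sym.
    by rewrite oppr_ge0; case: (c_offdiag ba) => ->.
  by rewrite reflectionE pairing_simple_root.
- case/andP => /pred2P [] -> /pred2P [] -> red asc;
    try by [case: (right_ascent_last asc) | case: (reduced_last2 (w := [::]) red)].
  have [c0|c1] := c_offdiag ab.
    have E : equiv_word [:: a; b; a] [:: b].
      by move=> f /=; rewrite reflection_comm // reflectionK.
    by have := asc _ E.
  exists 0, 1; split=> //; apply: functional_extensionality => x.
  rewrite /= !(reflectionE, pairing_lincomb, pairing_simple_root) c_diag c1.
  by rewrite c_sym c1 /lincomb /simple_root; case: (x == a); case: (x == b); ring.
- case/and4P => /pred2P [] -> /pred2P [] -> /pred2P [] -> _ red asc;
    try by [case: (right_ascent_last asc) | case: (reduced_last2 red)].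
    by move: red; rewrite -cats1 => /reduced_catl/reduced_last2.
  move: red asc; rewrite -!cats1 -!catA /= => /reduced_catr red /right_ascent_catr asc.
  have [c0|c1] := c_offdiag ab.
    have E : equiv_word [:: b; a; b] [:: a].
      by move=> f /=; rewrite reflection_comm ?reflectionK // c_sym.
    by have := red _ E.
  have E : equiv_word [:: b; a; b; a] [:: a; b].
    by move=> f /=; rewrite reflection_braid ?reflectionK // c_sym.
  by have := asc _ E.
Qed.

(* Humphreys, Reflection groups and Coxeter groups, Thm 5.4: split [p] as
   [q ++ u] with [u] in the rank-two subgroup of [a] and [b] and [q] as short
   as possible; then [a] and [b] are right ascents of the shorter word [q]. *)
Lemma right_ascent_root_ge0 p a : reduced p -> right_ascent p a ->
  forall x, 0 <= word_action p (simple_root a) x.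
Proof.
have [n] := ubnP (size p); elim: n p a => // n IH p a.
case/lastP: p => [|p' b] p_lt p_red p_asc; first exact: simple_root_ge0.
have ab : a != b by apply: contraPneq p_asc => ->; apply: right_ascent_last.
pose split_at m := exists q u, [/\ size q = m, all (mem [:: a; b]) u,
  equiv_word (rcons p' b) (q ++ u) & (size q + size u = size (rcons p' b))%N].
have split_p' : split_at (size p').
  by exists p', [:: b]; rewrite /= !inE eqxx orbT cats1 size_rcons addn1.
have [m [q [u [q_m u_ab E qu_size]]] m_least] : exists2 m, split_at m &
    forall j, split_at j -> (m <= j)%N by apply: exists_least_nat; exists (size p').
have qu_red : reduced (q ++ u) by apply: (reduced_equiv p_red E); rewrite size_cat.
have q_asc t : t \in [:: a; b] -> right_ascent q t.
  move=> t_ab q2 E2; rewrite leqNgt; apply/negP => q2_lt.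
  have E' : equiv_word (rcons p' b) (q2 ++ t :: u).
    by move=> f; rewrite E !word_action_cat /= -E2 word_action_rcons reflectionK.
  have := p_red _ E'; rewrite size_cat /= => p_le.
  have : split_at (size q2).
    exists q2, (t :: u); split=> //=; first by rewrite t_ab u_ab.
    lia.
  by move/m_least; rewrite -q_m leqNgt q2_lt.
have q_lt : (size q < n)%N.
  by rewrite q_m (leq_ltn_trans (m_least _ split_p')) // -ltnS -(size_rcons p' b).
have qu_asc : right_ascent (q ++ u) a.
  by apply: (right_ascent_equiv p_asc E); rewrite size_cat.
have [al [be [al_ge0 be_ge0 u_root]]] :=
  dihedral_root_ge0 ab u_ab (reduced_catr qu_red) (right_ascent_catr qu_asc).
have q_red := reduced_catl qu_red.
move=> x; rewrite E word_action_cat u_root word_action_lincomb /lincomb.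
have q_root t : t \in [:: a; b] -> 0 <= word_action q (simple_root t) x.
  by move=> t_ab; apply: IH q_lt q_red (q_asc t t_ab) x.
by rewrite addr_ge0 // mulr_ge0 // q_root // !inE eqxx ?orbT.
Qed.

Lemma reduced_antidominant_le w f : (forall a, pairing a f <= 0) -> reduced w ->
  forall x, f x <= word_action w f x.
Proof.
move=> f_anti; elim/last_ind: w => [|w a IH] // wa_red x.
have w_red : reduced w by apply: (reduced_catl (q := [:: a])); rewrite cats1.
have w_root := right_ascent_root_ge0 w_red (reduced_rcons_right_ascent wa_red) x.
rewrite word_action_rcons reflectionE word_action_lincomb /lincomb mul1r.
by rewrite (le_trans (IH w_red x)) // lerDl mulr_ge0 // oppr_ge0.
Qed.

Theorem antidominant_le_word_action f : (forall a, pairing a f <= 0) ->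
  forall w x, f x <= word_action w f x.
Proof.
move=> f_anti w x; have [w' E w'_red] := exists_reduced w.
by rewrite E; apply: reduced_antidominant_le.
Qed.
End SimplyLacedWeylGroup.

Lemma sum_ord_pick n m (F : nat -> int) :
  \sum_(j < n) (val j == m)%:R * F j = if (m < n)%N then F m else 0.
Proof.
rewrite -(@big_ord1_eq _ 0 +%R F) [RHS]big_mkcond; apply: eq_bigr => j _.
by case: (_ == _); rewrite ?mul1r ?mul0r.
Qed.

Section SupernovaQuiver.
Variables (r k : nat) (s : 'I_k -> nat).
Notation V := (svert r k s).
Implicit Types (a b x : V) (f : V -> int) (w : seq V).

Lemma sedges_sym a b : sedges a b = sedges b a.
Proof.
case: a => [la|[i j]]; case: b => [lb|[i' j']] //=.
by rewrite eq_sym orbC.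
Qed.

Lemma cartan_sym a b : cartan a b = cartan b a.
Proof. by rewrite /cartan eq_sym sedges_sym. Qed.

Lemma cartan_diag a : cartan a a = 2.
Proof. by rewrite /cartan eqxx. Qed.

Lemma cartan_offdiag a b : a != b -> cartan a b = 0 \/ cartan a b = -1.
Proof.
rewrite /cartan => /negbTE ->.
have : (sedges a b <= 1)%N by case: a => [?|[? ?]]; case: b => [?|[? ?]]; apply: leq_b1.
by case: (sedges a b) => [|[|//]] _; [left | right].
Qed.

Lemma wact_cat w1 w2 f : wact (w1 ++ w2) f = wact w1 (wact w2 f).
Proof. exact: foldr_cat. Qed.

Lemma wact_antidominant_le f : (forall a, form_e a f <= 0) ->
  forall w x, f x <= wact w f x.
Proof. exact: (antidominant_le_word_action cartan_sym cartan_diag cartan_offdiag). Qed.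

Definition arm (i : 'I_k) (j : nat) : V := inr (existT _ i (inord j)).

Lemma arm_val (i : 'I_k) (j : 'I_(s i).+1) : arm i j = inr (existT _ i j).
Proof. by rewrite /arm inord_val. Qed.

Lemma eq_inr (u v : {i : 'I_k & 'I_(s i).+1}) : (inr u == inr v :> V) = (u == v).
Proof. by []. Qed.

Lemma cartan_arm_inl (i : 'I_k) j l : (j <= s i)%N -> cartan (arm i j) (inl l) = - (j == 0)%:R.
Proof. by move=> j_le; rewrite /cartan /arm /= inordK // natz. Qed.

Lemma cartan_arm_other (i i0 : 'I_k) j j0 : i0 != i -> cartan (arm i j) (arm i0 j0) = 0.
Proof.
move=> ne; rewrite /cartan /arm /= eq_inr [i == i0]eq_sym (negbTE ne) andFb.
by case: eqP => // -[E]; rewrite E eqxx in ne.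
Qed.

Lemma cartan_arm (i : 'I_k) j j0 : (j < (s i).+1)%N -> (j0 < (s i).+1)%N ->
  cartan (arm i j) (arm i j0) = 2 * (j0 == j)%:R - (j0.+1 == j)%:R - (j0 == j.+1)%:R.
Proof.
move=> j_le j0_le; rewrite /cartan /arm /= eq_inr eq_Tagged /= -val_eqE /= !inordK //.
rewrite eqxx /=; case: (eqVneq j0 j) => [<-|ne] /=.
  by rewrite !(ltn_eqF (ltnSn _)) !(gtn_eqF (ltnSn _)).
rewrite [j == _]eq_sym; case: (eqVneq j0.+1 j) => [<-|_] /=.
  by rewrite (@ltn_eqF j0 j0.+2).
by rewrite mulr0 sub0r natz.
Qed.

Lemma form_e_arm (i : 'I_k) j f : (j <= s i)%N -> (forall l, f (inl l) = 1) ->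
  form_e (arm i j) f = 2 * f (arm i j) - (if j is j'.+1 then f (arm i j') else r%:Z)
                       - (if (j < s i)%N then f (arm i j.+1) else 0).
Proof.
move=> j_le f_inl; rewrite /form_e big_sumType /=.
under eq_bigr => l _ do rewrite f_inl mulr1 cartan_arm_inl //.
have -> : \sum_(p : {i & 'I_(s i).+1}) cartan (arm i j) (inr p) * f (inr p) =
    \sum_(i0 < k) \sum_(j0 < (s i0).+1) cartan (arm i j) (arm i0 j0) * f (arm i0 j0).
  by rewrite sig_big_dep; apply: eq_big => // -[i0 j0]; rewrite arm_val.
rewrite (bigD1 i) //= [X in _ + (_ + X)]big1 ?addr0 => [|i0 ne]; last first.
  by apply: big1 => j0 _; rewrite cartan_arm_other // mul0r.
rewrite sumr_const card_ord.
under eq_bigr => j0 _ do rewrite cartan_arm ?ltn_ord // !mulrBl -mulrA.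
rewrite !sumrB -mulr_sumr !(sum_ord_pick _ _ (fun n => f (arm i n))) ltnS j_le.
case: j j_le => [|j] j_le.
  rewrite big1 => [|j0 _]; last by rewrite mul0r.
  by rewrite ltnS eqxx /= mulNrn natz; ring.
under eq_bigr => j0 _ do rewrite eqSS.
by rewrite (sum_ord_pick _ _ (fun n => f (arm i n))) !ltnS (ltnW j_le) oppr0 mul0rn add0r.
Qed.

Section ArmReflections.
Variables (mu : forall i : 'I_k, 'I_(s i).+1 -> nat) (i : 'I_k).
Arguments mu : clear implicits.

Definition partial_size t : nat := \sum_(f < (s i).+1 | (f < t)%N) mu i f.

Lemma partial_size0 : partial_size 0 = 0%N.
Proof. by rewrite /partial_size big_pred0. Qed.

Lemma partial_size_full : partial_size (s i).+1 = psize mu i.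
Proof. by apply: eq_bigl => f; rewrite ltn_ord. Qed.

Definition arm_reflected t : V -> int := fun x =>
  if x is inr (existT i' j) then
    if (i' == i) && (j < t)%N then r%:Z - (partial_size j.+1)%:Z else vmu mu x
  else 1.

Lemma arm_reflected0 : arm_reflected 0 = vmu mu.
Proof. by apply: functional_extensionality => -[l|[i' j]] //=; rewrite andbF. Qed.

Lemma arm_reflected_arm t j : (j <= s i)%N -> arm_reflected t (arm i j) =
  if (j < t)%N then r%:Z - (partial_size j.+1)%:Z
  else (psize mu i)%:Z - (partial_size j)%:Z.
Proof. by move=> j_le; rewrite /arm /= eqxx inordK. Qed.

Lemma arm_reflectedS t x : x != arm i t -> arm_reflected t.+1 x = arm_reflected t x.
Proof.
case: x => [//|[i' j]] /=; case: (eqVneq i' i) => [ii'|//] /=; subst i'.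
rewrite ltnS leq_eqVlt; case: (eqVneq (val j) t) => [<-|//].
by rewrite arm_val eqxx.
Qed.

Lemma sref_arm_reflected t : (t <= s i)%N ->
  sref (arm i t) (arm_reflected t) = arm_reflected t.+1.
Proof.
move=> t_le; apply: functional_extensionality => x; rewrite /sref.
have [->|x_ne] := eqVneq x (arm i t); last by rewrite subr0 arm_reflectedS.
rewrite form_e_arm // !(arm_reflected_arm _ t_le) ltnn ltnSn.
have -> : (if (t < s i)%N then arm_reflected t (arm i t.+1) else 0) =
          (psize mu i)%:Z - (partial_size t.+1)%:Z.
  case: ltnP => [t_lt|t_ge]; first by rewrite arm_reflected_arm // ltnNge leqnSn.
  have -> : t = s i by apply/eqP; rewrite eqn_leq t_le t_ge.
  by rewrite partial_size_full subrr.
case: t t_le => [|t] t_le; first by rewrite partial_size0; ring.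
by rewrite (arm_reflected_arm _ (ltnW t_le)) ltnSn; ring.
Qed.

Definition arm_word t : seq V := rev (map (arm i) (iota 0 t)).

Lemma arm_wordS t : arm_word t.+1 = arm i t :: arm_word t.
Proof. by rewrite /arm_word -addn1 iotaD map_cat rev_cat. Qed.

Lemma wact_arm_word t : (t <= (s i).+1)%N -> wact (arm_word t) (vmu mu) = arm_reflected t.
Proof.
elim: t => [|t IH] t_le; first by rewrite arm_reflected0.
rewrite arm_wordS [wact _ _]/= IH; last exact: ltnW.
exact: sref_arm_reflected.
Qed.

Lemma arm_reflected_last : arm_reflected (s i).+1 (arm i (s i)) = r%:Z - (psize mu i)%:Z.
Proof. by rewrite arm_reflected_arm // ltnSn partial_size_full. Qed.

Lemma vmu_arm0 : vmu mu (arm i 0) = (psize mu i)%:Z.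
Proof. by rewrite -arm_reflected0 arm_reflected_arm // partial_size0 subr0. Qed.

End ArmReflections.
End SupernovaQuiver.

Theorem corollary2p8 (r k : nat) (s : 'I_k -> nat)
  (mu : forall i : 'I_k, 'I_(s i).+1 -> nat)
  (mu_dec : forall (i : 'I_k) (j1 j2 : 'I_(s i).+1), (j1 <= j2)%N -> (mu i j2 <= mu i j1)%N)
  (mu_nz : forall i : 'I_k, (0 < psize mu i)%N) :
  imaginary_root (vmu (r:=r) mu) -> forall i : 'I_k, (psize mu i <= r)%N.
Proof.
move=> [w [d [d_ge0 _ _ d_anti v_eq]]] i.
have d_le := wact_antidominant_le d_anti.
case: v_eq => v_eq.
  have v_wd : vmu mu = wact w d := functional_extensionality _ _ v_eq.
  have := le_trans (d_ge0 _) (d_le (arm_word r s i (s i).+1 ++ w) (arm r s i (s i))).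
  by rewrite wact_cat -v_wd wact_arm_word // arm_reflected_last subr_ge0 lez_nat.
have := le_trans (d_ge0 _) (d_le w (arm r s i 0)).
by rewrite -oppr_le0 -v_eq vmu_arm0 lez_nat leqNgt mu_nz.
Qed.
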